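(* Let $\mathcal{F}\subseteq\mathcal{P}(\omega)$ be a free filter and let $D\subseteq(-1,1)^\omega$ be a countable set. Then there exists a homeomorphism $h\colon Q\to Q$ of $Q=[-1,1]^\omega$ such that $h[D]$ is in general position, $h[(-1,1)^\omega]=(-1,1)^\omega$ and $h[K_\mathcal{F}]=K_\mathcal{F}$.
   Context: A filter on $\omega$ is free if it contains all cofinite sets. $Q=[-1,1]^\omega$ has the product topology. $K_\mathcal{F}=\{f\in Q:\forall m\in\omega\ \{n\in\omega:|f(n)|<2^{-m}\}\in\mathcal{F}\}$. A set $X\subseteq Q$ is in general position if for all $x,y\in X$ with $x\ne y$ one has $x(n)\ne y(n)$ for every $n\in\omega$. *)

From HB Require Import structures.
From mathcomp Require Import all_boot all_order all_algebra.
From mathcomp Require Import all_classical all_reals all_analysis.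
Unset Strict Implicit. Unset Printing Implicit Defensive.
Import Order.TTheory GRing.Theory Num.Theory.
Import numFieldNormedType.Exports.
Local Open Scope classical_set_scope.
Local Open Scope ring_scope.

Definition cubeQ (R : realType) : set {ptws nat -> R} :=
  [set f | forall n : nat, -1 <= f n <= 1].

Definition openCube (R : realType) : set {ptws nat -> R} :=
  [set f | forall n : nat, -1 < f n < 1].

Definition free_filter (F : set_system nat) : Prop :=
  ProperFilter F /\ (forall A : set nat, finite_set (~` A) -> F A).

Definition K_F (R : realType) (F : set_system nat) : set {ptws nat -> R} :=
  [set f | cubeQ R f /\ forall m : nat, F [set n | `|f n| < 2 ^- m]].

Definition general_position (R : realType) (X : set {ptws nat -> R}) : Prop :=
  X `<=` cubeQ R /\
  forall x y, X x -> X y -> x <> y -> forall n : nat, x n <> y n.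

Definition homeomorphism_of (T : topologicalType) (A : set T) (h : T -> T) : Prop :=
  exists g : T -> T,
    (forall x, A x -> A (h x)) /\ (forall y, A y -> A (g y)) /\
    (forall x, A x -> g (h x) = x) /\ (forall y, A y -> h (g y) = y) /\
    {within A, continuous h} /\ {within A, continuous g}.
Arguments homeomorphism_of {T}.

From HB Require Import structures.
From mathcomp Require Import all_boot all_order all_algebra.
From mathcomp Require Import all_classical all_reals all_analysis.
From mathcomp Require Import ring lra.
Import Order.TTheory GRing.Theory Num.Theory.
Import numFieldNormedType.Exports.
Local Open Scope classical_set_scope.
Local Open Scope ring_scope.

(* The homeomorphism is the composite of two maps of the form
   x |-> (bend (x n) (a x n))_n, where bend t c = t + c (1 - |t|) is the
   piecewise linear homeomorphism of [-1,1] that fixes -1 and 1 and sends 0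
   to c.  Each map moves only the coordinates in a set J, with parameters
   a x n depending only on the coordinates outside J; hence it is inverted by
   unbending with the same parameters, and it preserves Q and (-1,1)^omega.
   Moving each coordinate n > 0 by at most 2^-n preserves K_F since F is free.

   Enumerate D as (e_i).  The first map moves coordinate 0 by the parameter
   c(x) = sum_m w_m x_(m+1).  The weights are chosen one at a time: w_k avoids
   the countably many values that close the gap between the partial sums of
   two points, and w_k and all later weights are so small (the "slack") that
   the tail of the series cannot close a gap that is already open.  Two
   distinct points of D thus get distinct first coordinates.  The second map
   moves coordinate n > 0 by the parameter l_n x_0, where 0 < l_n < 2^-n
   avoids, for each pair of points, the single value of l_n for which they
   would agree at coordinate n. *)

Section Bend.
Context {R : realType}.
Implicit Types t u c : R.

Definition bend t c : R := t + c * (1 - `|t|).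
Definition unbend u c : R :=
  (u - c + `|u - c|) / 2 / (1 - c) + (u - c - `|u - c|) / 2 / (1 + c).

Lemma bend0 t : bend t 0 = t.
Proof. by rewrite /bend mul0r addr0. Qed.

Lemma unbend0 u : unbend u 0 = u.
Proof. by rewrite /unbend !subr0 addr0 !divr1; field. Qed.

Lemma bend_ge0 t c : 0 <= t -> bend t c = c + t * (1 - c).
Proof. by move=> t0; rewrite /bend ger0_norm //; lra. Qed.

Lemma bend_lt0 t c : t < 0 -> bend t c = c + t * (1 + c).
Proof. by move=> t0; rewrite /bend ltr0_norm //; lra. Qed.

Lemma unbend_ge u c : -1 < c < 1 -> c <= u -> unbend u c = (u - c) / (1 - c).
Proof.
move=> /andP[c1 c2] cu.
rewrite /unbend ger0_norm ?subr_ge0 // subrr mul0r mul0r addr0.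
have c1' : 1 - c != 0 by rewrite gt_eqF //; lra.
by field.
Qed.

Lemma unbend_lt u c : -1 < c < 1 -> u < c -> unbend u c = (u - c) / (1 + c).
Proof.
move=> /andP[c1 c2] cu.
rewrite /unbend ltr0_norm ?subr_lt0 // opprK subrr mul0r mul0r add0r.
have c1' : 1 + c != 0 by rewrite gt_eqF //; lra.
by field.
Qed.

Lemma bendK c t : -1 < c < 1 -> unbend (bend t c) c = t.
Proof.
move=> /[dup] hc /andP[c1 c2]; case: (leP 0 t) => t0.
  rewrite bend_ge0 // unbend_ge //; last by nra.
  by rewrite addrC addKr mulfK //; lra.
rewrite bend_lt0 // unbend_lt //; last by nra.
by rewrite addrC addKr mulfK //; lra.
Qed.

Lemma unbendK c u : -1 < c < 1 -> bend (unbend u c) c = u.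
Proof.
move=> /[dup] hc /andP[c1 c2]; case: (leP c u) => cu.
  rewrite unbend_ge // bend_ge0 ?divr_ge0 //; try lra.
  by rewrite divfK; lra.
rewrite unbend_lt // bend_lt0; last by rewrite pmulr_llt0 ?invr_gt0; lra.
by rewrite divfK; lra.
Qed.

Lemma bend_itvE c t : -1 < c < 1 -> (-1 <= bend t c <= 1) = (-1 <= t <= 1).
Proof.
move=> /andP[c1 c2]; case: (leP 0 t) => t0; [rewrite bend_ge0 // | rewrite bend_lt0 //];
  by apply/idP/idP => /andP[a b]; apply/andP; split; nra.
Qed.

Lemma bend_oitvE c t : -1 < c < 1 -> (-1 < bend t c < 1) = (-1 < t < 1).
Proof.
move=> /andP[c1 c2]; case: (leP 0 t) => t0; [rewrite bend_ge0 // | rewrite bend_lt0 //];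
  by apply/idP/idP => /andP[a b]; apply/andP; split; nra.
Qed.

Lemma unbend_itvE c u : -1 < c < 1 -> (-1 <= unbend u c <= 1) = (-1 <= u <= 1).
Proof. by move=> hc; rewrite -[in RHS](unbendK c u hc) bend_itvE. Qed.

Lemma unbend_oitvE c u : -1 < c < 1 -> (-1 < unbend u c < 1) = (-1 < u < 1).
Proof. by move=> hc; rewrite -[in RHS](unbendK c u hc) bend_oitvE. Qed.

Lemma dist_bend c t : -1 <= t <= 1 -> `|bend t c - t| <= `|c|.
Proof.
move=> /andP[t1 t2]; rewrite /bend addrC addKr normrM; apply: ler_piMr => //.
have t1' : `|t| <= 1 by rewrite ler_norml t1.
by rewrite ger0_norm ?subr_ge0 // lerBlDr lerDl.
Qed.

Lemma dist_unbend c u : -1 < c < 1 -> -1 <= u <= 1 -> `|unbend u c - u| <= `|c|.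
Proof.
move=> hc hu; rewrite -[X in _ - X](unbendK c u hc) distrC.
by apply: dist_bend; rewrite unbend_itvE.
Qed.

Lemma eq_bend_param a b p q l : -1 < a < 1 -> -1 < b < 1 -> p != q ->
  bend a (l * p) = bend b (l * q) ->
  l = - (a - b) / (p * (1 - `|a|) - q * (1 - `|b|)).
Proof.
move=> ha hb pq E.
have E' : (a - b) + l * (p * (1 - `|a|) - q * (1 - `|b|)) = 0.
  by transitivity (bend a (l * p) - bend b (l * q)); [rewrite /bend; ring | rewrite E subrr].
have d0 : p * (1 - `|a|) - q * (1 - `|b|) != 0.
  apply/eqP => d0; move: E'; rewrite d0 mulr0 addr0 => /eqP; rewrite subr_eq0 => /eqP ab.
  move: d0; rewrite ab -mulrBl => /eqP; rewrite mulf_eq0 subr_eq0 (negbTE pq) /=.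
  have b1 : `|b| < 1 by rewrite ltr_norml.
  by rewrite subr_eq0 eq_sym lt_eqF.
by apply: (mulIf d0); rewrite divfK // -[RHS]addr0 -E'; ring.
Qed.

Lemma cvg_bend (T : Type) (G : set_system T) (f g : T -> R) t c : Filter G ->
  f @ G --> t -> g @ G --> c -> (fun y => bend (f y) (g y)) @ G --> bend t c.
Proof.
move=> FG ft gc; apply: cvgD => //; apply: cvgM => //.
by apply: cvgB; [exact: cvg_cst | exact: cvg_norm].
Qed.

Lemma cvg_unbend (T : Type) (G : set_system T) (f g : T -> R) u c : Filter G ->
  -1 < c < 1 ->
  f @ G --> u -> g @ G --> c -> (fun y => unbend (f y) (g y)) @ G --> unbend u c.
Proof.
move=> FG /andP[c1 c2] fu gc.
have fgc : (fun y => f y - g y) @ G --> u - c by apply: cvgB.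
have nfgc : (fun y => `|f y - g y|) @ G --> `|u - c| by apply: cvg_norm.
apply: cvgD => //; apply: cvgM => //.
- by apply: cvgM => //; [apply: cvgD | exact: cvg_cst].
- by apply: cvgV; [rewrite subr_eq0 gt_eqF | apply: cvgB => //; exact: cvg_cst].
- by apply: cvgM => //; [apply: cvgB | exact: cvg_cst].
- by apply: cvgV; [rewrite gt_eqF //; lra | apply: cvgD => //; exact: cvg_cst].
Qed.

(* Clamping makes the parameters below continuous and bounded on all of
   R^omega; on Q it is the identity. *)
Definition clamp t : R := Num.max (-1) (Num.min t 1).

Lemma clamp_id t : -1 <= t <= 1 -> clamp t = t.
Proof. by case/andP => t1 t2; rewrite /clamp (min_l t2) (max_r t1). Qed.

Lemma normr_clamp t : `|clamp t| <= 1.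
Proof.
by rewrite ler_norml /clamp le_max ge_max ge_min !lexx orbT /= andbT; lra.
Qed.

Lemma clamp_continuous : continuous clamp.
Proof.
apply: max_fun_continuous; first exact: cst_continuous.
apply: min_fun_continuous; last exact: cst_continuous.
by move=> t; exact: cvg_id.
Qed.

End Bend.

(* Continuity on [{ptws nat -> R}] is established along arbitrary filters:
   elaborating goals about [nbhs x] in the product topology is very slow. *)
Lemma cvg_continuous {T U : topologicalType} (f : T -> U) :
  (forall (G : set_system T) x, Filter G -> G --> x -> f @ G --> f x) -> continuous f.
Proof. by move=> fG x; apply: fG; exact: cvg_id. Qed.

Lemma continuous_fmap_cvg {T U : topologicalType} {f : T -> U} {G : set_system T} {x} :
  continuous f -> G --> x -> f @ G --> f x.
Proof. by move=> cf Gx; apply: cvg_trans (cf x); exact: cvg_fmap2. Qed.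

Section BendMap.
Context {R : realType}.
Local Notation X := {ptws nat -> R}.
Local Notation cube := (cubeQ R).

Lemma openCube_cube {x : X} : openCube R x -> cube x.
Proof. by move=> ox n; case/andP: (ox n) => /ltW -> /ltW ->. Qed.

Lemma coord_continuous n : continuous (fun x : X => x n).
Proof. exact: proj_continuous. Qed.

Lemma clamp_coord_continuous n : continuous (fun x : X => clamp (x n)).
Proof. by move=> x; exact: continuous_comp (coord_continuous n x) (clamp_continuous _). Qed.

Definition bendmap (a : X -> nat -> R) (x : X) : X := fun n => bend (x n) (a x n).
Definition unbendmap (a : X -> nat -> R) (y : X) : X := fun n => unbend (y n) (a y n).

Definition bend_param (a : X -> nat -> R) (J : pred nat) : Prop :=
  [/\ forall x n, -1 < a x n < 1,
      forall n, continuous (fun x => a x n),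
      forall x n, ~~ J n -> a x n = 0 &
      forall x y : X, (forall n, ~~ J n -> x n = y n) -> a x = a y].

Context {a : X -> nat -> R} {J : pred nat}.
Hypothesis aP : bend_param a J.

Let a_itv : forall x n, -1 < a x n < 1. Proof. by case: aP. Qed.
Let a_out : forall x n, ~~ J n -> a x n = 0. Proof. by case: aP. Qed.

Lemma bendmap_out x n : ~~ J n -> bendmap a x n = x n.
Proof. by move=> Jn; rewrite /bendmap /= a_out // bend0. Qed.

Lemma unbendmap_out y n : ~~ J n -> unbendmap a y n = y n.
Proof. by move=> Jn; rewrite /unbendmap /= a_out // unbend0. Qed.

Lemma bendmap_param x : a (bendmap a x) = a x.
Proof. by case: aP => _ _ _; apply=> n Jn; exact: bendmap_out. Qed.

Lemma unbendmap_param y : a (unbendmap a y) = a y.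
Proof. by case: aP => _ _ _; apply=> n Jn; exact: unbendmap_out. Qed.

Lemma bendmapK : cancel (bendmap a) (unbendmap a).
Proof.
move=> x; apply/funext => n.
by rewrite /unbendmap /= bendmap_param /bendmap /= (bendK _ _ (a_itv x n)).
Qed.

Lemma unbendmapK : cancel (unbendmap a) (bendmap a).
Proof.
move=> y; apply/funext => n.
by rewrite /bendmap /= unbendmap_param /unbendmap /= (unbendK _ _ (a_itv y n)).
Qed.

Lemma bendmap_cube x : cube x -> cube (bendmap a x).
Proof. by move=> cx n; rewrite /bendmap /= (bend_itvE _ _ (a_itv x n)); exact: cx n. Qed.

Lemma unbendmap_cube y : cube y -> cube (unbendmap a y).
Proof. by move=> cy n; rewrite /unbendmap /= (unbend_itvE _ _ (a_itv y n)); exact: cy n. Qed.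

Lemma bendmap_open x : openCube R x -> openCube R (bendmap a x).
Proof. by move=> ox n; rewrite /bendmap /= (bend_oitvE _ _ (a_itv x n)); exact: ox n. Qed.

Lemma unbendmap_open y : openCube R y -> openCube R (unbendmap a y).
Proof. by move=> oy n; rewrite /unbendmap /= (unbend_oitvE _ _ (a_itv y n)); exact: oy n. Qed.

Lemma cvg_bendmap (G : set_system X) x : Filter G -> G --> x ->
  bendmap a @ G --> bendmap a x.
Proof.
case: aP => _ a_cont _ _ FG Gx; apply/pointwise_cvgP => n.
by apply: cvg_bend; apply: continuous_fmap_cvg _ Gx; [exact: coord_continuous | exact: a_cont].
Qed.

Lemma cvg_unbendmap (G : set_system X) y : Filter G -> G --> y ->
  unbendmap a @ G --> unbendmap a y.
Proof.
case: aP => _ a_cont _ _ FG Gy; apply/pointwise_cvgP => n.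
apply: cvg_unbend; [exact: a_itv | |];
  apply: continuous_fmap_cvg _ Gy; [exact: coord_continuous | exact: a_cont].
Qed.

Lemma bendmap_continuous : continuous (bendmap a).
Proof. by apply: cvg_continuous => G x FG; exact: cvg_bendmap. Qed.

Lemma unbendmap_continuous : continuous (unbendmap a).
Proof. by apply: cvg_continuous => G y FG; exact: cvg_unbendmap. Qed.

Lemma dist_bendmap x n : cube x -> `|bendmap a x n - x n| <= `|a x n|.
Proof. by move=> cx; apply: dist_bend; exact: cx n. Qed.

Lemma dist_unbendmap y n : cube y -> `|unbendmap a y n - y n| <= `|a y n|.
Proof. by move=> cy; apply: dist_unbend; [exact: a_itv | exact: cy n]. Qed.

End BendMap.

Lemma image_eq_cancel {T : Type} {A : set T} {f g : T -> T} : cancel g f ->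
  (forall x, A x -> A (f x)) -> (forall y, A y -> A (g y)) -> f @` A = A.
Proof.
move=> gK fA gA; apply/seteqP; split => [_ [x Ax <-]|y Ay]; first exact: fA.
by exists (g y); [exact: gA | exact: gK].
Qed.

Lemma homeomorphism_of_cancel {T : topologicalType} {A : set T} {f g : T -> T} :
  cancel f g -> cancel g f -> continuous f -> continuous g ->
  (forall x, A x -> A (f x)) -> (forall y, A y -> A (g y)) -> homeomorphism_of A f.
Proof.
move=> fK gK cf cg fA gA; exists g; split; first exact: fA.
split; first exact: gA.
split; first by move=> x _; exact: fK.
split; first by move=> y _; exact: gK.
by split; exact: continuous_subspaceT.
Qed.

Lemma general_position_sub {R : realType} {X Y : set {ptws nat -> R}} :
  X `<=` Y -> general_position R Y -> general_position R X.
Proof. by move=> XY [Yc Ysep]; split=> [x /XY/Yc //|x y /XY Yx /XY Yy]; exact: Ysep. Qed.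

Lemma countable_sub_range {T : choiceType} {A D : set T} {x0 : T} :
  A x0 -> D `<=` A -> countable D -> exists2 e : nat -> T, (forall i, A (e i)) & D `<=` range e.
Proof.
move=> Ax0 DA /countable_injP[f finj].
exists (fun n => xget x0 [set x | D x /\ f x = n]).
  by move=> n; case: xgetP => [x _ [Dx _]|_]; [exact: DA | exact: Ax0].
move=> x Dx; exists (f x) => //.
have /(xgetPex x0)[Dy fy] : exists y, D y /\ f y = f x by exists x.
by apply: finj; rewrite ?inE.
Qed.

Lemma countable_sub_image2 {T : Type} {S : set T} (r : nat -> nat -> T) :
  (forall v, S v -> exists i j, v = r i j) -> countable S.
Proof.
move=> Sr; apply: (@sub_countable _ _ _ ((fun p : nat * nat => r p.1 p.2) @` setT)).
  by apply: subset_card_le => v /Sr[i [j ->]]; exists (i, j).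
exact: card_le_trans (card_image_le _ _) (countableP _).
Qed.

Section Avoid.
Context {R : realType}.

Lemma exists_notin_countable (S : set R) (a : R) : countable S -> 0 < a ->
  exists v, 0 < v < a /\ ~ S v.
Proof.
move=> cS a0; apply/not_existsP => H.
have sub : [set` `]0, a[] `<=` S.
  move=> v /=; rewrite in_itv /= => va.
  by have /not_andP[//|/contrapT] := H v.
have : countable [set` `]0, a[] by exact: sub_countable (subset_card_le sub) cS.
move/countable_lebesgue_measure0; rewrite lebesgue_measure_itv /= lte_fin a0.
by rewrite EFinN sube0 => -[] a_eq0; move: a0; rewrite a_eq0 ltxx.
Qed.

Definition avoid (S : set R) (a : R) : R := xget 0 [set v | 0 < v < a /\ ~ S v].

Lemma avoidP (S : set R) a : countable S -> 0 < a -> 0 < avoid S a < a /\ ~ S (avoid S a).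
Proof.
move=> cS a0; apply: (@xgetPex _ 0 [set v | 0 < v < a /\ ~ S v]).
exact: exists_notin_countable.
Qed.

End Avoid.

Lemma K_F_perturb {R : realType} {F : set_system nat} {x y : {ptws nat -> R}} :
  free_filter F -> K_F R F x -> cubeQ R y ->
  (forall n, (0 < n)%N -> `|y n - x n| <= 2 ^- n) -> K_F R F y.
Proof.
move=> [FF Fcof] [_ Kx] cy dxy; split => // m.
have Fgt : F [set n | (m < n)%N].
  apply: Fcof; apply: (@sub_finite_set _ _ `I_m.+1); last exact: finite_II.
  by move=> n /=; rewrite ltnNge => /negP; rewrite negbK.
apply: filterS (filterI (Kx m.+1) Fgt) => n [/= xn mn].
have yx : `|y n - x n| <= 2 ^- m.+1.
  apply: le_trans (dxy n (leq_ltn_trans (leq0n m) mn)) _.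
  by rewrite lef_pV2 ?posrE ?exprn_gt0 // ler_eXn2l // ltr1n.
have -> : (2 : R) ^- m = 2 ^- m.+1 + 2 ^- m.+1.
  have m0 : (2 : R) ^+ m != 0 by rewrite expf_neq0 // pnatr_eq0.
  by rewrite exprS; field.
by rewrite -(subrK (x n) (y n)); apply: le_lt_trans (ler_normD _ _) _; apply: ler_ltD.
Qed.

Section FirstCoordinate.
Context {R : realType}.
Local Notation X := {ptws nat -> R}.
Variable e : nat -> X.
Hypothesis e_open : forall i, openCube R (e i).

Definition wsum (w : nat -> R) (x : X) : nat -> R :=
  series (fun m => w m * clamp (x m.+1)).

Definition gap w i j k : R :=
  bend (e i 0%N) (wsum w (e i) k) - bend (e j 0%N) (wsum w (e j) k).

Definition slope i j m : R :=
  (1 - `|e i 0%N|) * clamp (e i m.+1) - (1 - `|e j 0%N|) * clamp (e j m.+1).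

Lemma gapS w i j k : gap w i j k.+1 = gap w i j k + w k * slope i j k.
Proof. by rewrite /gap /wsum !seriesSr /slope /bend; ring. Qed.

Lemma eq_gap w w' i j k : (forall m, (m < k)%N -> w m = w' m) ->
  gap w i j k = gap w' i j k.
Proof.
move=> ww'; rewrite /gap /wsum /series /=.
by congr (bend _ _ - bend _ _); apply: eq_big_nat => m /andP[_ mk]; rewrite ww'.
Qed.

Lemma wsum0 w x : wsum w x 0 = 0.
Proof. by rewrite /wsum /series /= big_geq. Qed.

Lemma gap0 w i j : gap w i j 0 = e i 0%N - e j 0%N.
Proof. by rewrite /gap !wsum0 !bend0. Qed.

Definition bad_weights w k : set R :=
  [set v | exists i j, slope i j k != 0 /\ gap w i j k + v * slope i j k = 0].

Lemma countable_bad_weights w k : countable (bad_weights w k).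
Proof.
apply: (countable_sub_image2 (fun i j => - gap w i j k / slope i j k)).
move=> v [i [j [s0 E]]]; exists i, j.
apply: (mulIf s0); rewrite divfK //; apply/eqP.
by rewrite -subr_eq0 opprK addrC E.
Qed.

Definition gap_margin w k : R :=
  \big[Num.min/1]_(ij : 'I_k * 'I_k | gap w ij.1 ij.2 k != 0) (`|gap w ij.1 ij.2 k| / 4).

Lemma gap_margin_gt0 w k : 0 < gap_margin w k.
Proof. by apply: lt_bigmin => // ij g0; rewrite divr_gt0 // normr_gt0. Qed.

Lemma gap_margin_le {w k i j} : (i < k)%N -> (j < k)%N -> gap w i j k != 0 ->
  gap_margin w k <= `|gap w i j k| / 4.
Proof. by move=> ik jk g0; apply: (bigmin_le_cond _ (j := (Ordinal ik, Ordinal jk))). Qed.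

(* [weights k] is the pair of the weights w_0, ..., w_(k-1) (extended by
   zero) and of the slack at step k. *)
Definition next_weights k (ws : (nat -> R) * R) : (nat -> R) * R :=
  let w := fun m => if m == k then avoid (bad_weights ws.1 k) (ws.2 / 2) else ws.1 m in
  (w, Num.min (ws.2 / 2) (gap_margin w k.+1)).

Fixpoint weights k : (nat -> R) * R :=
  if k is k'.+1 then next_weights k' (weights k') else (fun=> 0, 1 / 2).

Definition weight m : R := (weights m.+1).1 m.
Definition slack k : R := (weights k).2.

Lemma slack_gt0 k : 0 < slack k.
Proof.
elim: k => [|k IH]; rewrite /slack /=; first by rewrite divr_gt0.
by rewrite lt_min gap_margin_gt0 andbT divr_gt0.
Qed.

Lemma slack_halve k : slack k.+1 <= slack k / 2.
Proof. by rewrite /slack /= ge_min lexx. Qed.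

Lemma slack_le_expr k : slack k <= 2 ^- k.
Proof.
elim: k => [|k IH]; first by rewrite /slack /= expr0 invr1; lra.
by apply: le_trans (slack_halve k) _; rewrite exprS invfM; lra.
Qed.

Lemma weights_stable k m : (m < k)%N -> (weights k).1 m = weight m.
Proof.
elim: k => // k IH; rewrite ltnS leq_eqVlt => /orP[/eqP -> //|mk].
by rewrite /= ifN ?IH // neq_ltn mk.
Qed.

Lemma weight_spec k : 0 < weight k < slack k / 2 /\ ~ bad_weights (weights k).1 k (weight k).
Proof.
rewrite /weight /= eqxx /=; apply: avoidP; first exact: countable_bad_weights.
by rewrite divr_gt0 // slack_gt0.
Qed.

Lemma weight_ge0 k : 0 <= weight k.
Proof. by have [/andP[/ltW]] := weight_spec k. Qed.

Lemma gap_weight i j k : gap weight i j k = gap (weights k).1 i j k.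
Proof. by apply: eq_gap => m mk; rewrite weights_stable. Qed.

Lemma gap_neq0 i j k : slope i j k != 0 -> gap weight i j k.+1 != 0.
Proof.
move=> s0; rewrite gapS gap_weight; apply/eqP => E.
by have [_] := weight_spec k; apply; exists i, j.
Qed.

Lemma slack_le_gap {i j k} : (i < k.+1)%N -> (j < k.+1)%N -> gap weight i j k.+1 != 0 ->
  slack k.+1 <= `|gap weight i j k.+1| / 4.
Proof.
move=> ik jk g0; rewrite gap_weight in g0 *.
apply: le_trans (gap_margin_le ik jk g0); by rewrite /slack /= ge_min lexx orbT.
Qed.

Lemma tail_weight {k n} : (k <= n)%N -> \sum_(k <= m < n) weight m + slack n <= slack k.
Proof.
elim: n => [|n IH]; first by rewrite leqn0 => /eqP ->; rewrite big_geq // add0r.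
rewrite leq_eqVlt => /orP[/eqP ->|]; first by rewrite big_geq // add0r.
rewrite ltnS => kn; rewrite big_nat_recr //=; apply: le_trans (IH kn).
have [/andP[_ wn] _] := weight_spec n; have := slack_halve n.
by rewrite -addrA lerD2l; lra.
Qed.

Lemma dist_wsum x k n : (k <= n)%N -> `|wsum weight x n - wsum weight x k| <= slack k.
Proof.
move=> kn; rewrite /wsum sub_series_geq //; apply: le_trans (ler_norm_sum _ _ _) _.
suff : \sum_(k <= m < n) `|weight m * clamp (x m.+1)| <= \sum_(k <= m < n) weight m.
  by have := tail_weight kn; have := slack_gt0 n; lra.
apply: ler_sum => m _; rewrite normrM (ger0_norm (weight_ge0 m)).
by apply: ler_piMr; [exact: weight_ge0 | exact: normr_clamp].
Qed.

Lemma wsum_cvg x : cvgn (wsum weight x).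
Proof.
apply: normed_cvg; apply: (@series_le_cvg _ _ weight).
- by move=> n /=; exact: normr_ge0.
- exact: weight_ge0.
- move=> n /=; rewrite normrM (ger0_norm (weight_ge0 n)).
  by apply: ler_piMr; [exact: weight_ge0 | exact: normr_clamp].
apply: nondecreasing_is_cvgn.
  move=> m n mn; rewrite /series /=.
  exact: (@nondecreasing_series R weight xpredT 0 (fun k _ _ => weight_ge0 k) m n mn).
exists (slack 0) => _ [n _ <-]; have := tail_weight (leq0n n); have := slack_gt0 n.
by rewrite /series /=; lra.
Qed.

Definition drift (x : X) : R := limn (wsum weight x).

Lemma dist_drift x k : `|drift x - wsum weight x k| <= slack k.
Proof.
have dk : (fun n => `|wsum weight x n - wsum weight x k|) @ \oo --> `|drift x - wsum weight x k|.
  by apply: cvg_norm; apply: cvgB; [exact: wsum_cvg | exact: cvg_cst].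
rewrite -(cvg_lim _ dk) //; apply: limr_le; first exact: (cvgP _ dk).
by exists k => // n /= kn; apply: dist_wsum.
Qed.

Lemma normr_drift x : `|drift x| <= 1 / 2.
Proof. by have := dist_drift x 0; rewrite wsum0 subr0. Qed.

Lemma wsum_continuous k : continuous (fun x => wsum weight x k).
Proof.
apply: cvg_continuous => G x FG Gx; elim: k => [|k IH].
  have -> : (fun y => wsum weight y 0) = fun=> 0 by apply/funext => y; exact: wsum0.
  by rewrite wsum0; exact: cvg_cst.
have wsumS y : wsum weight y k.+1 = wsum weight y k + weight k * clamp (y k.+1).
  by rewrite /wsum seriesSr.
rewrite (funext wsumS) wsumS; apply: cvgD => //; apply: cvgM; first exact: cvg_cst.
exact: continuous_fmap_cvg (clamp_coord_continuous _) Gx.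
Qed.

Lemma drift_continuous : continuous drift.
Proof.
apply: cvg_continuous => G x FG Gx; apply/cvgrPdist_lt => r r0.
have [k kr] : exists k, slack k < r / 4.
  exists (Num.truncn (4 / r)).+1; apply: le_lt_trans (slack_le_expr _) _.
  rewrite -[r / 4]invrK ltf_pV2 ?posrE ?exprn_gt0 ?invr_gt0 ?divr_gt0 // invf_div.
  apply: lt_le_trans (truncnS_gt _) _; rewrite -natrX ler_nat.
  exact/ltnW/ltn_expl.
have /cvgrPdist_lt /(_ (r / 2) (divr_gt0 r0 (ltr0n R 2))) near_x :=
  continuous_fmap_cvg (wsum_continuous k) Gx.
near=> y.
have xy : `|wsum weight x k - wsum weight y k| < r / 2 by near: y; exact: near_x.
have dx := dist_drift x k; have dy := dist_drift y k.
have tri : `|drift x - drift y| <= `|drift x - wsum weight x k|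
    + `|wsum weight x k - wsum weight y k| + `|drift y - wsum weight y k|.
  have -> : drift x - drift y = (drift x - wsum weight x k)
      + (wsum weight x k - wsum weight y k) - (drift y - wsum weight y k) by ring.
  by apply: le_trans (ler_normB _ _) _; rewrite lerD2r ler_normD.
lra.
Unshelve. all: by end_near.
Qed.

Lemma bend_coeff_itv i : 0 < 1 - `|e i 0%N| <= 1.
Proof.
have : `|e i 0%N| < 1 by rewrite ltr_norml; exact: e_open.
by have := normr_ge0 (e i 0%N); lra.
Qed.

Lemma dist_gap_drift i j k :
  `|(bend (e i 0%N) (drift (e i)) - bend (e j 0%N) (drift (e j))) - gap weight i j k|
    <= 2 * slack k.
Proof.
have -> : bend (e i 0%N) (drift (e i)) - bend (e j 0%N) (drift (e j)) - gap weight i j k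
    = (1 - `|e i 0%N|) * (drift (e i) - wsum weight (e i) k)
      - (1 - `|e j 0%N|) * (drift (e j) - wsum weight (e j) k).
  by rewrite /gap /bend; ring.
apply: le_trans (ler_normB _ _) _; rewrite !normrM.
have [/andP[ai1 ai2] /andP[aj1 aj2]] := (bend_coeff_itv i, bend_coeff_itv j).
rewrite (gtr0_norm ai1) (gtr0_norm aj1).
have := dist_drift (e i) k; have := dist_drift (e j) k.
have := normr_ge0 (drift (e i) - wsum weight (e i) k).
have := normr_ge0 (drift (e j) - wsum weight (e j) k).
nra.
Qed.

Lemma gap_eventually_neq0 {i j} : e i <> e j ->
  exists k0, forall k, (k0 <= k)%N -> gap weight i j k != 0.
Proof.
move=> eij; have [[m sm]|] := pselect (exists m, slope i j m != 0).
  exists m.+1; elim=> // k IH; rewrite ltnS leq_eqVlt => /orP[/eqP <-|mk].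
    exact: gap_neq0.
  have [sk|sk] := eqVneq (slope i j k) 0; last exact: gap_neq0.
  by rewrite gapS sk mulr0 addr0; exact: IH.
(* If no slope is nonzero, e i and e j agree off coordinate 0. *)
move=> no_slope; have slope0 m : slope i j m = 0.
  by apply/eqP; apply: contrapT => sm; apply: no_slope; exists m; apply/negP.
exists 0%N => k _; have -> : gap weight i j k = e i 0%N - e j 0%N.
  by elim: k => [|k IH]; [exact: gap0 | rewrite gapS IH slope0 mulr0 addr0].
rewrite subr_eq0; apply/eqP => e0; apply: eij; apply/funext => -[//|n].
have [aj0 _] := andP (bend_coeff_itv j).
move: (slope0 n); rewrite /slope e0 -mulrBr => /eqP.
rewrite mulf_eq0 (negbTE (lt0r_neq0 aj0)) /= subr_eq0 => /eqP.
by rewrite !clamp_id //; exact: openCube_cube (e_open _) _.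
Qed.

Lemma bend_drift_inj i j : e i <> e j ->
  bend (e i 0%N) (drift (e i)) <> bend (e j 0%N) (drift (e j)).
Proof.
move=> eij E; have [k0 gk0] := gap_eventually_neq0 eij.
set k := maxn k0 (maxn i j).
have gk : gap weight i j k.+1 != 0 by apply: gk0; rewrite leqW // leq_maxl.
have ik : (i < k.+1)%N by rewrite ltnS /k (leq_trans (leq_maxl i j)) // leq_maxr.
have jk : (j < k.+1)%N by rewrite ltnS /k (leq_trans (leq_maxr i j)) // leq_maxr.
(* |gap| <= 2 slack <= |gap| / 2 *)
have dk := dist_gap_drift i j k.+1; rewrite E subrr sub0r normrN in dk.
have := slack_le_gap ik jk gk; have : 0 < `|gap weight i j k.+1| by rewrite normr_gt0.
lra.
Qed.

Definition first_param (x : X) (n : nat) : R := if n is 0%N then drift x else 0.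

Lemma first_paramP : bend_param first_param (pred1 0%N).
Proof.
split.
- move=> x [|n] /=; last by rewrite ltrN10 ltr01.
  have := normr_drift x; rewrite ler_norml => /andP[d1 d2].
  by apply/andP; split; lra.
- move=> [|n]; first exact: drift_continuous.
  by apply: cvg_continuous => G x FG Gx; exact: cvg_cst.
- by move=> x [].
- move=> x y xy; apply/funext => -[|n] //=; rewrite /drift /wsum.
  by congr (limn (series _)); apply/funext => m; rewrite xy.
Qed.

End FirstCoordinate.

Section Separation.
Context {R : realType}.
Local Notation X := {ptws nat -> R}.
Local Notation cube := (cubeQ R).
Variable e : nat -> X.
Hypothesis e_open : forall i, openCube R (e i).

Let e_cube i : cube (e i) := openCube_cube (e_open i).

Local Notation first_bend := (bendmap (first_param e)).

Definition bad_rate n : set R := [set l | exists i j,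
  first_bend (e i) 0%N != first_bend (e j) 0%N /\
  bend (e i n) (l * first_bend (e i) 0%N) = bend (e j n) (l * first_bend (e j) 0%N)].

Lemma countable_bad_rate n : countable (bad_rate n).
Proof.
apply: (countable_sub_image2 (fun i j => - (e i n - e j n) /
   (first_bend (e i) 0%N * (1 - `|e i n|) - first_bend (e j) 0%N * (1 - `|e j n|)))).
by move=> l [i [j [neq E]]]; exists i, j; exact: eq_bend_param (e_open i n) (e_open j n) neq E.
Qed.

Definition rate n : R := avoid (bad_rate n) (2 ^- n).

Lemma rate_spec n : 0 < rate n < 2 ^- n /\ ~ bad_rate n (rate n).
Proof. by apply: avoidP; [exact: countable_bad_rate | rewrite invr_gt0 exprn_gt0]. Qed.

Definition rest_param (x : X) (n : nat) : R :=
  if n is 0%N then 0 else rate n * clamp (x 0%N).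

Lemma normr_rest_param x n : `|rest_param x n| < 2 ^- n.
Proof.
case: n => [|n] /=; first by rewrite normr0 expr0 invr1.
have [/andP[r0 r1] _] := rate_spec n.+1.
rewrite normrM (gtr0_norm r0); apply: le_lt_trans r1.
by apply: ler_piMr; [exact: ltW | exact: normr_clamp].
Qed.

Lemma rest_paramP : bend_param rest_param (fun n => n != 0%N).
Proof.
split.
- move=> x n; rewrite -ltr_norml; apply: lt_le_trans (normr_rest_param x n) _.
  by rewrite invf_le1 ?exprn_gt0 // exprn_ege1 // ler1n.
- move=> n; apply: cvg_continuous => G x FG Gx; case: n => [|n]; first exact: cvg_cst.
  rewrite /rest_param /=; apply: cvgM; first exact: cvg_cst.
  exact: continuous_fmap_cvg (clamp_coord_continuous _) Gx.
- by move=> x [].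
- by move=> x y xy; apply/funext => -[|n] //=; rewrite xy.
Qed.

Definition separate (x : X) : X := bendmap rest_param (first_bend x).
Definition separate_inv (y : X) : X := unbendmap (first_param e) (unbendmap rest_param y).

Lemma separateK : cancel separate separate_inv.
Proof.
by move=> x; rewrite /separate_inv /separate (bendmapK rest_paramP) (bendmapK (first_paramP e)).
Qed.

Lemma separate_invK : cancel separate_inv separate.
Proof.
move=> y; rewrite /separate_inv /separate.
by rewrite (unbendmapK (first_paramP e)) (unbendmapK rest_paramP).
Qed.

Lemma separate_cube x : cube x -> cube (separate x).
Proof.
by move=> cx; apply: (bendmap_cube rest_paramP); apply: (bendmap_cube (first_paramP e)).
Qed.

Lemma separate_inv_cube y : cube y -> cube (separate_inv y).
Proof.
move=> cy; apply: (unbendmap_cube (first_paramP e)).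
exact: (unbendmap_cube rest_paramP).
Qed.

Lemma separate_homeomorphism : homeomorphism_of cube separate.
Proof.
apply: homeomorphism_of_cancel separateK separate_invK _ _ separate_cube separate_inv_cube.
- move=> x; exact: continuous_comp (bendmap_continuous (first_paramP e) x)
    (bendmap_continuous rest_paramP _).
- move=> y; exact: continuous_comp (unbendmap_continuous rest_paramP y)
    (unbendmap_continuous (first_paramP e) _).
Qed.

Lemma separate_openCube : separate @` openCube R = openCube R.
Proof.
apply: image_eq_cancel separate_invK _ _ => x ox.
- by apply: (bendmap_open rest_paramP); apply: (bendmap_open (first_paramP e)).
- by apply: (unbendmap_open (first_paramP e)); apply: (unbendmap_open rest_paramP).
Qed.

Lemma dist_separate x n : cube x -> (0 < n)%N -> `|separate x n - x n| <= 2 ^- n.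
Proof.
case: n => [//|n] cx _.
have -> : x n.+1 = first_bend x n.+1 by rewrite (bendmap_out (first_paramP e)).
have c1 : cube (first_bend x) by exact: (bendmap_cube (first_paramP e)).
apply: (@le_trans _ _ `|rest_param (first_bend x) n.+1|); last exact/ltW/normr_rest_param.
exact: dist_bendmap _ n.+1 c1.
Qed.

Lemma dist_separate_inv y n : cube y -> (0 < n)%N -> `|separate_inv y n - y n| <= 2 ^- n.
Proof.
case: n => [//|n] cy _; rewrite /separate_inv (unbendmap_out (first_paramP e)) //.
apply: (@le_trans _ _ `|rest_param y n.+1|); last exact/ltW/normr_rest_param.
exact: dist_unbendmap rest_paramP _ n.+1 cy.
Qed.

Lemma separate_K_F {F} : free_filter F -> separate @` K_F R F = K_F R F.
Proof.
move=> FF; apply: image_eq_cancel separate_invK _ _ => x Kx; have [cx _] := Kx.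
- exact: K_F_perturb FF Kx (separate_cube x cx) (fun n => dist_separate x n cx).
- exact: K_F_perturb FF Kx (separate_inv_cube x cx) (fun n => dist_separate_inv x n cx).
Qed.

Lemma separate_neq i j : e i <> e j -> forall n, separate (e i) n <> separate (e j) n.
Proof.
move=> eij; have first0 : first_bend (e i) 0%N <> first_bend (e j) 0%N.
  exact: bend_drift_inj e_open i j eij.
case=> [|n]; first by rewrite /separate !(bendmap_out rest_paramP).
have cube1 k : cube (first_bend (e k)) by exact: (bendmap_cube (first_paramP e)).
have sep k : separate (e k) n.+1 = bend (e k n.+1) (rate n.+1 * first_bend (e k) 0%N).
  by rewrite -(clamp_id _ (cube1 k 0%N)) -(bendmap_out (first_paramP e) (e k) n.+1).
move=> E; have [_] := rate_spec n.+1; apply; exists i, j.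
by split; [exact/eqP | rewrite !sep in E].
Qed.

Lemma general_position_separate : general_position R (separate @` range e).
Proof.
split; first by move=> _ [_ [i _ <-] <-]; exact: separate_cube _ (e_cube i).
move=> _ _ [_ [i _ <-] <-] [_ [j _ <-] <-] neq; apply: separate_neq => eij.
by apply: neq; rewrite eij.
Qed.

End Separation.

Theorem mainTheorem12 (R : realType) (F : set_system nat)
  (D : set {ptws nat -> R}) :
  free_filter F -> D `<=` openCube R -> countable D ->
  exists h : {ptws nat -> R} -> {ptws nat -> R},
    homeomorphism_of (cubeQ R) h /\
    general_position R (h @` D) /\
    h @` openCube R = openCube R /\
    h @` K_F R F = K_F R F.
Proof.
move=> FF Dopen cD.
have open0 : openCube R (fun=> 0) by move=> n /=; rewrite ltrN10 ltr01.
have [e e_open De] := countable_sub_range open0 Dopen cD.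
exists (separate e); split; [|split; [|split]].
- exact: separate_homeomorphism e e_open.
- apply: general_position_sub _ (general_position_separate e e_open).
  exact: image_subset.
- exact: separate_openCube e e_open.
- exact: (separate_K_F e e_open FF).
Qed.
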